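(* Let $G$ be a topological groupoid such that $G^{(0)}$ is Hausdorff and $r\colon G\to G^{(0)}$ is open, and let $Z$ be a locally compact space endowed with a continuous right action of $G$ with momentum map $p\colon Z\to G^{(0)}$. Then $\mathcal{H}Z$ carries a continuous right action of $G$ extending the one on $Z$: the momentum map is the unique continuous map $\mathcal{H}p\colon\mathcal{H}Z\to G^{(0)}$ with $S\subset p^{-1}(\mathcal{H}p(S))$, and $S\cdot g=\{sg: s\in S\}$ for $g\in G^{\mathcal{H}p(S)}$; in particular $\{z\}\cdot g=\{zg\}$.
   Context: Quasi-compact: every open cover has a finite subcover; locally compact: every point has a quasi-compact Hausdorff neighbourhood (not necessarily Hausdorff). $\mathcal{H}Z$ is the set of nonempty $S\subset Z$ such that every finite family of open sets each meeting $S$ has nonempty intersection, with the topology generated by $\{S:S\cap V\neq\emptyset\}$ ($V$ open) and $\{S:S\cap Q=\emptyset\}$ ($Q$ quasi-compact); $z\in Z$ is identified with $\{z\}$ (this inclusion need not be continuous). *)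

From HB Require Import structures.
From mathcomp Require Import all_boot all_classical all_reals all_analysis.

Set Implicit Arguments.
Unset Strict Implicit.
Unset Printing Implicit Defensive.

Local Open Scope classical_set_scope.

(** Topological groupoid with arrow space [G] and unit space [G0]
    (a separate type; [u] is the unit inclusion, which is a topological
    embedding since it is continuous with continuous left inverse [r]).
    [g] and [h] are composable (product [mul g h] = gh) iff [s g = r h]. *)
Definition is_top_groupoid (G G0 : topologicalType) (s r : G -> G0)
    (u : G0 -> G) (mul : G -> G -> G) (inv : G -> G) : Prop :=
  (forall x, s (u x) = x /\ r (u x) = x) /\
  (forall g h, s g = r h -> s (mul g h) = s h /\ r (mul g h) = r g) /\
  (forall g h k, s g = r h -> s h = r k ->
      mul (mul g h) k = mul g (mul h k)) /\
  (forall g, mul (u (r g)) g = g /\ mul g (u (s g)) = g) /\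
  (forall g, [/\ s (inv g) = r g, r (inv g) = s g,
                mul g (inv g) = u (r g) & mul (inv g) g = u (s g)]) /\
  [/\ continuous s, continuous r, continuous u & continuous inv] /\
  {within [set gh : G * G | s gh.1 = r gh.2],
    continuous (fun gh : G * G => mul gh.1 gh.2)}.

Definition is_right_action (G G0 X : topologicalType) (s r : G -> G0)
    (u : G0 -> G) (mul : G -> G -> G) (p : X -> G0) (act : X -> G -> X) : Prop :=
  [/\ continuous p,
      (forall x g, p x = r g -> p (act x g) = s g),
      (forall x, act x (u (p x)) = x),
      (forall x g h, p x = r g -> s g = r h ->
          act (act x g) h = act x (mul g h)) &
      {within [set xg : X * G | p xg.1 = r xg.2],
        continuous (fun xg : X * G => act xg.1 xg.2)}].

(** Locally compact: every point has a quasi-compact neighbourhood which is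
    Hausdorff in the subspace topology (the space itself need not be
    Hausdorff). *)
Definition hausdorff_subset (Z : topologicalType) (K : set Z) : Prop :=
  forall x y, K x -> K y -> x <> y ->
    exists U V : set Z, [/\ open U, open V, U x, V y & U `&` V `&` K = set0].

Definition locally_compact_sp (Z : topologicalType) : Prop :=
  forall z : Z, exists K : set Z, [/\ nbhs z K, compact K & hausdorff_subset K].

Definition isH (Z : topologicalType) (S : set Z) : Prop :=
  S !=set0 /\
  forall F : set (set Z), finite_set F ->
    (forall V, F V -> open V /\ V `&` S !=set0) ->
    \bigcap_(V in F) V !=set0.

Record HZ (Z : topologicalType) := MkHZ { hz_set : set Z; hz_prop : isH hz_set }.

Section HZtopology.
Context (Z : topologicalType).


HB.instance Definition _ := gen_eqMixin (HZ Z).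
HB.instance Definition _ := gen_choiceMixin (HZ Z).

Definition hz_subbase : set (set (HZ Z)) :=
  [set B | (exists V : set Z, open V /\
              B = [set S | hz_set S `&` V !=set0]) \/
           (exists Q : set Z, compact Q /\
              B = [set S | hz_set S `&` Q = set0])].

HB.instance Definition _ :=
  @isSubBaseTopological.Build (HZ Z) (set (HZ Z)) hz_subbase id.

Lemma isH_set1 (z : Z) : isH [set z].
Proof.
split; first by exists z.
move=> F _ HF; exists z => V FV.
by have [_ [y [Vy yz]]] := HF V FV; rewrite -yz.
Qed.

Definition hz_pt (z : Z) : HZ Z := MkHZ (isH_set1 z).

End HZtopology.

(* Continuity of p and Hausdorffness of G0 force p to be constant on every
   S in HZ: points with distinct images would give two disjoint open sets
   meeting S.  For composable g, S.g is again in HZ: open sets V_i meeting S.g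
   pull back, by continuity of the action, to open sets W_i meeting S and a
   neighbourhood N of g; since r is open, p^-1(r(N°)) is one more open set
   meeting S, and a common point w with p w = r g', g' in N, gives w.g' in every
   V_i.  Continuity of (S, g) |-> S.g is checked on the subbase.  For the sets
   {T | T misses Q}, Q compact, the tube lemma reduces it to: if z is not in S,
   then z and S have neighbourhoods U and B with T missing U for all T in B.
   Either z is separated from some point of S (and the H-property of T does
   it), or local compactness yields a compact neighbourhood of z missing S. *)

From HB Require Import structures.
From mathcomp Require Import all_boot all_classical all_reals all_analysis.

Set Implicit Arguments.
Unset Strict Implicit.
Unset Printing Implicit Defensive.

Local Open Scope classical_set_scope.

Lemma filter_finite_bigI (T : Type) (I : choiceType) (A : set I) (f : I -> set T)
    (F : set_system T) :
  Filter F -> finite_set A -> (forall i, A i -> F (f i)) -> F (\bigcap_(i in A) f i).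
Proof. by move=> FF /finite_fsetP[E ->] Ff; apply: filter_bigI => i /Ff. Qed.

Section HZ.
Variable Z : topologicalType.
Implicit Types (S T : HZ Z) (U V Q : set Z) (z : Z).

Lemma hz_set_inj : injective (@hz_set Z).
Proof.
by move=> [S hS] [T hT] /= eST; subst T; congr MkHZ; exact: Prop_irrelevance.
Qed.

Lemma open_hz_subbase (B : set (HZ Z)) : hz_subbase B -> open B.
Proof.
move=> hB; exists [set B]; first by move=> _ ->; exact: finI_from1.
by rewrite bigcup_set1.
Qed.

Lemma open_hz_meets V : open V -> open [set S | hz_set S `&` V !=set0].
Proof. by move=> oV; apply: open_hz_subbase; left; exists V. Qed.

Lemma open_hz_misses Q : compact Q -> open [set S | hz_set S `&` Q = set0].
Proof. by move=> cQ; apply: open_hz_subbase; right; exists Q. Qed.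

Lemma cvg_hz_subbase (F : set_system (HZ Z)) S : Filter F ->
  (forall B, hz_subbase B -> B S -> F B) -> F --> S.
Proof.
move=> FF FB A [B [[D' D'sub eB] BS BA]]; apply: (filterS BA).
move: BS; rewrite -eB => -[C D'C CS].
have [E Esub eC] := D'sub C D'C.
suff FC : F C by apply: filterS FC => T CT; exists C.
rewrite -eC; apply: filter_bigI => B' EB'.
apply: FB; first by have := Esub B' EB'; rewrite inE.
by move: CS; rewrite -eC; apply.
Qed.

Lemma near_hz_meets S z V : open V -> hz_set S z -> V z ->
  \forall T \near S, hz_set T `&` V !=set0.
Proof.
by move=> oV Sz Vz; apply: open_nbhs_nbhs; split; [exact: open_hz_meets | exists z].
Qed.

Lemma isH_meets2 (S : set Z) U V : isH S -> open U -> open V ->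
  S `&` U !=set0 -> S `&` V !=set0 -> U `&` V !=set0.
Proof.
move=> [_ HS] oU oV [x SUx] [y SVy].
have [||w Hw] := HS ([set U] `|` [set V]).
- by rewrite finite_setU; split; exact: finite_set1.
- by move=> W [->|->]; split => //; [exists x | exists y]; rewrite setIC.
- by exists w; split; apply: Hw; [left | right].
Qed.

Lemma isH_const (Y : topologicalType) (f : Z -> Y) (S : set Z) x y :
  hausdorff_space Y -> continuous f -> isH S -> S x -> S y -> f x = f y.
Proof.
move=> hY cf HS Sx Sy; apply: hY => A B nA nB.
have oI (C : set Y) : open (f @^-1` C°).
  by apply: (proj1 (continuousP f) cf); exact: open_interior.
have [|w [/interior_subset Aw /interior_subset Bw]] :=
  isH_meets2 HS (oI A) (oI B) (ex_intro _ x (conj Sx nA)).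
  by exists y.
by exists (f w).
Qed.

Lemma not_hz_mem_near S z : locally_compact_sp Z -> ~ hz_set S z ->
  exists2 X : set Z, open X /\ X z & (\forall T \near S, hz_set T `&` X = set0).
Proof.
move=> lcZ Sz.
have [[y [Sy [U [V [oU oV Uz Vy UV0]]]]]|nsep] := pselect (exists y, hz_set S y /\
    exists U V, [/\ open U, open V, U z, V y & U `&` V = set0]).
  exists U => //; apply: filterS (near_hz_meets oV Sy Vy).
  move=> T TV; rewrite -subset0 => w [Tw Uw].
  have : U `&` V !=set0 by apply: isH_meets2 (hz_prop T) oU oV _ TV; exists w.
  by rewrite UV0 => -[].
have [K [nK cK hK]] := lcZ z.
have SK : hz_set S `&` K = set0.
  rewrite -subset0 => y [Sy Ky].
  have zy : z <> y by move=> zy; apply: Sz; rewrite zy.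
  have [U [V [oU oV Uz Vy UVK]]] := hK z y (nbhs_singleton nK) Ky zy.
  apply: nsep; exists y; split => //; exists (U `&` K°), V; split => //.
  - exact: openI oU (open_interior K).
  - rewrite -subset0 => w [[Uw /interior_subset Kw] Vw].
    by rewrite -UVK.
exists K°; first by split; [exact: open_interior | exact: nK].
apply: filterS (open_nbhs_nbhs (conj (open_hz_misses cK) SK)) => T TK.
by rewrite -subset0 => w [Tw /interior_subset Kw]; rewrite -TK.
Qed.

Definition hz_pick S : Z := projT1 (cid (proj1 (hz_prop S))).

Lemma hz_pickP S : hz_set S (hz_pick S).
Proof. exact: projT2 (cid (proj1 (hz_prop S))). Qed.

Definition hz_map (Y : Type) (f : Z -> Y) S : Y := f (hz_pick S).

Definition hz_image (f : Z -> Z) S : HZ Z :=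
  if pselect (isH (f @` hz_set S)) is left fS then MkHZ fS else S.

Lemma hz_imageE (f : Z -> Z) S :
  isH (f @` hz_set S) -> hz_set (hz_image f S) = f @` hz_set S.
Proof. by rewrite /hz_image; case: pselect. Qed.

Section HZMap.
Variables (Y : topologicalType) (f : Z -> Y).
Hypotheses (Y_hausdorff : hausdorff_space Y) (f_cont : continuous f).

Lemma hz_mapE S z : hz_set S z -> hz_map f S = f z.
Proof. by move=> Sz; apply: isH_const (hz_prop S) (hz_pickP S) Sz. Qed.

Lemma hz_map_continuous : continuous (hz_map f).
Proof.
apply/continuousP => A oA.
have -> : hz_map f @^-1` A = [set S | hz_set S `&` (f @^-1` A) !=set0].
  apply/seteqP; split => S /=.
    by exists (hz_pick S); split=> //; exact: hz_pickP.
  by move=> [z [Sz Az]]; rewrite (hz_mapE Sz).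
by apply: open_hz_meets; exact: (proj1 (continuousP f) f_cont).
Qed.

End HZMap.

Lemma hz_map_uniq (Y : Type) (f : Z -> Y) (h : HZ Z -> Y) :
  (forall S, hz_set S `<=` f @^-1` [set h S]) -> h = hz_map f.
Proof. by move=> hf; apply: funext => S; rewrite /hz_map (hf S _ (hz_pickP S)). Qed.

End HZ.

Section HZAction.
Variables (G G0 Z : topologicalType) (s r : G -> G0) (u : G0 -> G)
  (mul : G -> G -> G) (inv : G -> G) (p : Z -> G0) (act : Z -> G -> Z).
Hypotheses (groupoid : is_top_groupoid s r u mul inv)
  (action : is_right_action s r u mul p act)
  (G0_hausdorff : hausdorff_space G0)
  (r_open : forall A : set G, open A -> open (r @` A)).

Local Notation Hp := (hz_map p).
Local Notation Hact S g := (hz_image (act^~ g) S).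

Let p_cont : continuous p. Proof. by case: action. Qed.
Let p_act z g : p z = r g -> p (act z g) = s g.
Proof. by case: action => _ p_act _ _ _; exact: p_act. Qed.
Let act_unit z : act z (u (p z)) = z. Proof. by case: action. Qed.
Let act_mul z g h : p z = r g -> s g = r h -> act (act z g) h = act z (mul g h).
Proof. by case: action => _ _ _ act_mul _; exact: act_mul. Qed.

Let r_unit x : r (u x) = x. Proof. by case: groupoid => /(_ x)[]. Qed.
Let r_mul g h : s g = r h -> r (mul g h) = r g.
Proof. by move=> gh; case: groupoid => _ [/(_ g h gh) []]. Qed.
Let inv_axioms g : [/\ s (inv g) = r g, r (inv g) = s g,
  mul g (inv g) = u (r g) & mul (inv g) g = u (s g)].
Proof. by case: groupoid => _ [_ [_ [_ [+ _]]]]. Qed.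
Let s_cont : continuous s.
Proof. by case: groupoid => _ [_ [_ [_ [_ [[]]]]]]. Qed.
Let inv_cont : continuous inv.
Proof. by case: groupoid => _ [_ [_ [_ [_ [[]]]]]]. Qed.

Lemma act_near z g V : p z = r g -> nbhs (act z g) V ->
  \forall w \near z & g' \near g, p w = r g' -> V (act w g').
Proof.
case: action => _ _ _ _ /subspace_continuousP act_cont zg nV.
exact: (act_cont (z, g) zg).
Qed.

Lemma hz_map_eq S z : hz_set S z -> p z = Hp S.
Proof. by move=> Sz; rewrite (hz_mapE G0_hausdorff p_cont Sz). Qed.

Lemma isH_hz_act S g : Hp S = r g -> isH (act^~ g @` hz_set S).
Proof.
move=> Sg; have pS z : hz_set S z -> p z = r g by rewrite -Sg; exact: hz_map_eq.
split; first by exists (act (hz_pick S) g), (hz_pick S); first exact: hz_pickP.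
move=> F finF FS.
have /choice[WN WNP] : forall V, exists WN : set Z * set G, F V ->
    [/\ open WN.1, WN.1 `&` hz_set S !=set0, nbhs g WN.2 &
        forall w g', WN.1 w -> WN.2 g' -> p w = r g' -> V (act w g')].
  move=> V; have [FV|] := pselect (F V); last by exists (setT, setT).
  have [oV [y [Vzg [z Sz zg]]]] := FS V FV; subst y.
  have [[A N] [/= nA nN] AN] := act_near (pS z Sz) (open_nbhs_nbhs (conj oV Vzg)).
  exists (A°, N) => _; split => //=; first exact: open_interior.
    by exists z.
  by move=> w g' /interior_subset Aw Ng'; apply: (AN (w, g')).
pose N := \bigcap_(V in F) (WN V).2.
have nN : nbhs g N by apply: filter_finite_bigI => // V /WNP[].
have [|W|w Sw] := proj2 (hz_prop S) ((fst \o WN) @` F `|` [set p @^-1` (r @` N°)]).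
- by rewrite finite_setU; split; [exact: finite_image | exact: finite_set1].
- move=> [[V FV <-]|->]; first by have [] := WNP V FV.
  split; first by apply: (proj1 (continuousP p) p_cont); apply/r_open/open_interior.
  exists (hz_pick S); split; last exact: hz_pickP.
  by exists g; [exact: nN | rewrite (pS _ (hz_pickP S))].
have [g' /interior_subset Ng' rg'] : (r @` N°) (p w).
  exact: (Sw _ (or_intror erefl)).
exists (act w g') => V FV; have [_ _ _ WNV] := WNP V FV.
by apply: WNV (Ng' V FV) _; [apply: (Sw (WN V).1); left; exists V | rewrite rg'].
Qed.

Lemma actK z g : p z = r g -> act (act z g) (inv g) = z.
Proof.
move=> zg; have [_ r_inv mul_inv _] := inv_axioms g.
by rewrite act_mul ?r_inv // mul_inv -zg act_unit.
Qed.

Lemma actKV z g : p z = s g -> act (act z (inv g)) g = z.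
Proof.
move=> zg; have [s_inv r_inv _ inv_mul] := inv_axioms g.
by rewrite act_mul ?r_inv ?s_inv // inv_mul -zg act_unit.
Qed.

Lemma act_inv_near z g V : p z = s g -> nbhs (act z (inv g)) V ->
  \forall w \near z & g' \near g, p w = s g' -> V (act w (inv g')).
Proof.
move=> zg nV; have [_ r_inv _ _] := inv_axioms g.
have [[A N] [/= nA nN] AN] := act_near (etrans zg (esym r_inv)) nV.
exists (A, inv @^-1` N); first by split => //; exact: inv_cont.
move=> [w g'] [/= Aw Ng'] wg'; apply: (AN (w, inv g')) => //=.
by have [_ -> _ _] := inv_axioms g'.
Qed.

Lemma hz_actE S g : Hp S = r g -> hz_set (Hact S g) = act^~ g @` hz_set S.
Proof. by move=> Sg; rewrite hz_imageE //; exact: isH_hz_act. Qed.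

Lemma mem_hz_act T g z : Hp T = r g -> hz_set (Hact T g) z ->
  p z = s g /\ hz_set T (act z (inv g)).
Proof.
move=> Tg; rewrite hz_actE // => -[t Tt <-].
have tg : p t = r g by rewrite (hz_map_eq Tt).
by rewrite actK //; split; first exact: p_act.
Qed.

Lemma hz_map_act S g : Hp S = r g -> Hp (Hact S g) = s g.
Proof.
move=> Sg; rewrite -(hz_map_eq (hz_pickP (Hact S g))).
by have [] := mem_hz_act Sg (hz_pickP (Hact S g)).
Qed.

Lemma hz_act_meets_near S g V : Hp S = r g -> open V ->
  hz_set (Hact S g) `&` V !=set0 ->
  \forall Tg \near (S, g), Hp Tg.1 = r Tg.2 -> hz_set (Hact Tg.1 Tg.2) `&` V !=set0.
Proof.
move=> Sg oV; rewrite hz_actE // => -[_ [[z Sz <-] Vzg]].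
have [[A N] [/= nA nN] AN] :=
  act_near (etrans (hz_map_eq Sz) Sg) (open_nbhs_nbhs (conj oV Vzg)).
exists ([set T | hz_set T `&` A° !=set0], N).
  by split => //; exact: near_hz_meets (open_interior A) Sz nA.
move=> [T g'] [/= [w [Tw /interior_subset Aw]] Ng'] Tg'.
exists (act w g'); split; first by rewrite hz_actE //; exists w.
by apply: (AN (w, g')) => //=; rewrite (hz_map_eq Tw).
Qed.

Hypothesis Z_lc : locally_compact_sp Z.

Lemma not_mem_hz_act_near S g q : Hp S = r g -> ~ hz_set (Hact S g) q ->
  \forall q' \near q & Tg \near (S, g),
    Hp Tg.1 = r Tg.2 -> ~ hz_set (Hact Tg.1 Tg.2) q'.
Proof.
move=> Sg Sgq; have [qg|nqg] := pselect (p q = s g); last first.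
  have /existsNP[A /existsNP[B /not_implyP[nA /not_implyP[nB AB0]]]] :
    ~ cluster (nbhs (p q)) (s g) by move/G0_hausdorff.
  exists (p @^-1` A, [set Tg | B (s Tg.2)]).
    split; first exact: p_cont.
    exists (setT, s @^-1` B) => [|[? ?] [] //].
    by split; [exact: filterT | exact: s_cont].
  move=> [q' [T g']] [/= Aq' Bg'] Tg' /(mem_hz_act Tg') [q'g' _].
  by apply: AB0; exists (p q'); split; last rewrite q'g'.
have Sz : ~ hz_set S (act q (inv g)).
  move=> Sz; apply: Sgq; rewrite hz_actE //.
  by exists (act q (inv g)); last exact: actKV.
have [X [oX Xz] SX] := not_hz_mem_near Z_lc Sz.
have [[W N] [/= nW nN] WN] := act_inv_near qg (open_nbhs_nbhs (conj oX Xz)).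
exists (W, [set Tg | hz_set Tg.1 `&` X = set0 /\ N Tg.2]).
  by split => //; exists ([set T | hz_set T `&` X = set0], N).
move=> [q' [T g']] [/= Wq' [TX Ng']] Tg' /(mem_hz_act Tg') [q'g' Tq'].
have : (hz_set T `&` X) (act q' (inv g')) by split => //; exact: (WN (q', g')).
by rewrite TX.
Qed.

Lemma hz_act_misses_near S g Q : compact Q -> Hp S = r g ->
  hz_set (Hact S g) `&` Q = set0 ->
  \forall Tg \near (S, g), Hp Tg.1 = r Tg.2 -> hz_set (Hact Tg.1 Tg.2) `&` Q = set0.
Proof.
move=> /compact_near_coveringP cQ Sg SgQ.
have QSg q : Q q -> ~ hz_set (Hact S g) q.
  by move=> Qq Sgq; have : (hz_set (Hact S g) `&` Q) q by []; rewrite SgQ.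
have := cQ _ (nbhs (S, g))
  (fun Tg q => Hp Tg.1 = r Tg.2 -> ~ hz_set (Hact Tg.1 Tg.2) q) (nbhs_filter _)
  (fun q Qq => not_mem_hz_act_near Sg (QSg q Qq)).
apply: filterS => -[T g'] /= QT Tg'; rewrite -subset0 => q [Tgq Qq].
exact: QT Qq Tg' Tgq.
Qed.

Lemma hz_act_continuous : {within [set Tg : HZ Z * G | Hp Tg.1 = r Tg.2],
  continuous (fun Tg : HZ Z * G => Hact Tg.1 Tg.2)}.
Proof.
apply/subspace_continuousP => -[S g] /= Sg.
apply: cvg_hz_subbase => _ [[V [oV ->]]|[Q [cQ ->]]] /=.
- exact: hz_act_meets_near.
- exact: hz_act_misses_near.
Qed.

Lemma hz_act_right_action : is_right_action s r u mul Hp (fun S g => Hact S g).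
Proof.
split.
- exact: hz_map_continuous.
- exact: hz_map_act.
- move=> S; apply: hz_set_inj; rewrite hz_actE ?r_unit //.
  apply/seteqP; split => [_ [z Sz <-]|z Sz].
    by rewrite -(hz_map_eq Sz) act_unit.
  by exists z => //; rewrite -(hz_map_eq Sz) act_unit.
- move=> S g h Sg gh; apply: hz_set_inj.
  rewrite hz_actE ?hz_map_act // hz_actE // hz_actE ?r_mul //.
  have zg z : hz_set S z -> p z = r g by move=> Sz; rewrite (hz_map_eq Sz).
  apply/seteqP; split => [_ [_ [z Sz <-] <-]|_ [z Sz <-]].
    by exists z; rewrite ?act_mul ?zg.
  by exists (act z g); [exists z | rewrite act_mul ?zg].
- exact: hz_act_continuous.
Qed.

End HZAction.

Theorem proposition3p10 (G G0 Z : topologicalType)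
    (s r : G -> G0) (u : G0 -> G) (mul : G -> G -> G) (inv : G -> G)
    (p : Z -> G0) (act : Z -> G -> Z) :
  is_top_groupoid s r u mul inv ->
  hausdorff_space G0 ->
  (forall A : set G, open A -> open (r @` A)) ->
  locally_compact_sp Z ->
  is_right_action s r u mul p act ->
  exists (Hp : HZ Z -> G0) (Hact : HZ Z -> G -> HZ Z),
    [/\ continuous Hp /\ (forall S, hz_set S `<=` p @^-1` [set Hp S]),
        (forall Hp' : HZ Z -> G0, continuous Hp' ->
           (forall S, hz_set S `<=` p @^-1` [set Hp' S]) -> Hp' = Hp),
        (forall S g, r g = Hp S ->
           hz_set (Hact S g) = [set act z g | z in hz_set S]),
        is_right_action s r u mul Hp Hact &
        (forall z g, p z = r g ->
           Hp (hz_pt z) = p z /\ Hact (hz_pt z) g = hz_pt (act z g))].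
Proof.
move=> groupoid G0_hausdorff r_open Z_lc action.
have p_cont : continuous p by case: action.
have HpE := hz_mapE G0_hausdorff p_cont.
have HactE := hz_actE action G0_hausdorff r_open.
exists (hz_map p), (fun S g => hz_image (act^~ g) S); split.
- by split; [exact: hz_map_continuous | move=> S z /HpE ->].
- by move=> Hp' _; exact: hz_map_uniq.
- by move=> S g /esym; exact: HactE.
- exact: hz_act_right_action groupoid action G0_hausdorff r_open Z_lc.
- move=> z g zg; have Hpz : hz_map p (hz_pt z) = p z by exact: HpE.
  split => //; apply: hz_set_inj; rewrite HactE ?Hpz //=.
  by rewrite image_set1.
Qed.
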